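(* Let $E$ be a separable Banach space over $K$ and $G$ a compact $D$-submodule of $E$. If $X$ is an $E$-valued random variable whose law is normalised Haar measure on $G$, then $X$ is $K$-Gaussian and $G=\{x\in E:|T(x)|\le\|T(X)\|_\infty\ \text{for all }T\in E^*\}$.
   Context: $K$ is a local field (locally compact, non-discrete, totally disconnected topological field) with its non-archimedean absolute value $|\cdot|$ ($|x|=0\iff x=0$, $|xy|=|x||y|$, $|x+y|\le|x|\vee|y|$); $D=\{x\in K:|x|\le1\}$. A normed space over $K$ is a $K$-vector space $E$ with $\|\cdot\|:E\to[0,\infty)$, $\|x\|=0\iff x=0$, $\|\alpha x\|=|\alpha|\|x\|$, $\|x+y\|\le\|x\|\vee\|y\|$; a Banach space if complete. $E^*$ is the space of continuous $K$-linear functionals $E\to K$. For a $K$-valued random variable $Y$, $\|Y\|_\infty$ is the essential supremum of $|Y|$. $K^2$ is normed by $|(x_1,x_2)|=|x_1|\vee|x_2|$; $v_1,v_2\in K^2$ are orthonormal if $|v_1|=|v_2|=1$ and $|\alpha_1v_1+\alpha_2v_2|=|\alpha_1|\vee|\alpha_2|$ for all $\alpha_i\in K$. An $E$-valued random variable $X$ is $K$-Gaussian if whenever $X_1,X_2$ are independent copies of $X$ and $(\alpha_{11},\alpha_{12}),(\alpha_{21},\alpha_{22})\in K^2$ are orthonormal, $(\alpha_{11}X_1+\alpha_{12}X_2,\alpha_{21}X_1+\alpha_{22}X_2)$ has the same law as $(X_1,X_2)$. *)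

From HB Require Import structures.
From mathcomp Require Import all_boot all_order all_algebra.
From mathcomp Require Import all_classical all_reals all_analysis ess_sup_inf.
Set Implicit Arguments. Unset Strict Implicit. Unset Printing Implicit Defensive.
Import Order.TTheory GRing.Theory Num.Theory.
Local Open Scope classical_set_scope.
Local Open Scope ring_scope.

Section Metric.
Variables (R : realType) (T : Type) (d : T -> T -> R).

Definition mopen (U : set T) : Prop :=
  forall x, U x -> exists r : R, 0 < r /\ forall y, d x y < r -> U y.

Definition mborel : set (set T) := <<s mopen >>.

Definition mcompact (C : set T) : Prop :=
  forall F : set (set T), F `<=` mopen -> C `<=` \bigcup_(U in F) U ->
  exists s : seq (set T), (forall U, U \in s -> F U) /\
    C `<=` (fun x => exists2 U, U \in s & U x).

Definition mlocally_compact : Prop :=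
  forall x, exists C, mcompact C /\ exists r : R, 0 < r /\ forall y, d x y < r -> C y.

Definition mnondiscrete : Prop := ~ (forall x, mopen [set x]).

Definition mconnected (A : set T) : Prop :=
  forall U V, mopen U -> mopen V -> A `<=` U `|` V -> A `&` U `&` V = set0 ->
  A `&` U = set0 \/ A `&` V = set0.

Definition mtotally_disconnected : Prop :=
  forall A, mconnected A -> forall x y, A x -> A y -> x = y.

Definition mcomplete : Prop :=
  forall u : nat -> T,
    (forall e : R, 0 < e -> exists N, forall m n, (N <= m)%N -> (N <= n)%N -> d (u m) (u n) < e) ->
    exists l, forall e : R, 0 < e -> exists N, forall n, (N <= n)%N -> d (u n) l < e.

Definition mseparable : Prop :=
  exists u : nat -> T, forall x (e : R), 0 < e -> exists n, d x (u n) < e.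
End Metric.

Definition nonarch_abs (R : realType) (K : fieldType) (a : K -> R) : Prop :=
  [/\ forall x, 0 <= a x,
      forall x, a x = 0 <-> x = 0,
      forall x y, a (x * y) = a x * a y &
      forall x y, a (x + y) <= Num.max (a x) (a y)].

Definition distK (R : realType) (K : fieldType) (a : K -> R) (x y : K) : R := a (x - y).

Definition local_field (R : realType) (K : fieldType) (a : K -> R) : Prop :=
  [/\ nonarch_abs a, mlocally_compact (distK a), mnondiscrete (distK a) &
      mtotally_disconnected (distK a)].

Definition unit_ball (R : realType) (K : fieldType) (a : K -> R) : set K := [set x | a x <= 1].

Definition ultranorm (R : realType) (K : fieldType) (a : K -> R) (E : lmodType K) (n : E -> R) : Prop :=
  [/\ forall x, 0 <= n x,
      forall x, n x = 0 <-> x = 0,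
      forall (c : K) x, n (c *: x) = a c * n x &
      forall x y, n (x + y) <= Num.max (n x) (n y)].

Definition distE (R : realType) (K : fieldType) (E : lmodType K) (n : E -> R) (x y : E) : R := n (x - y).

Definition distE2 (R : realType) (K : fieldType) (E : lmodType K) (n : E -> R) (p q : E * E) : R :=
  Num.max (n (p.1 - q.1)) (n (p.2 - q.2)).

Definition banach (R : realType) (K : fieldType) (a : K -> R) (E : lmodType K) (n : E -> R) : Prop :=
  ultranorm a n /\ mcomplete (distE n).

Definition D_submodule (R : realType) (K : fieldType) (a : K -> R) (E : lmodType K) (G : set E) : Prop :=
  [/\ G 0, forall x y, G x -> G y -> G (x + y) &
      forall (c : K) x, unit_ball a c -> G x -> G (c *: x)].

Definition dual_elt (R : realType) (K : fieldType) (a : K -> R) (E : lmodType K) (n : E -> R)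
  (T : E -> K) : Prop :=
  (forall (c : K) x y, T (c *: x + y) = c * T x + T y) /\
  (forall x (e : R), 0 < e -> exists2 del : R, 0 < del &
      forall y, n (x - y) < del -> a (T x - T y) < e).

Section RV.
Variables (R : realType) (K : fieldType) (E : lmodType K) (n : E -> R).

Definition rvE (d : measure_display) (O : measurableType d) (X : O -> E) : Prop :=
  forall B, mborel (distE n) B -> measurable (X @^-1` B).

Definition same_law (d : measure_display) (O : measurableType d) (P : probability O R) (X : O -> E)
  (d' : measure_display) (O' : measurableType d') (P' : probability O' R) (Y : O' -> E) : Prop :=
  forall B, mborel (distE n) B -> P (X @^-1` B) = P' (Y @^-1` B).

Definition indepE (d : measure_display) (O : measurableType d) (P : probability O R)
  (X1 X2 : O -> E) : Prop :=
  forall A B, mborel (distE n) A -> mborel (distE n) B ->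
    P (X1 @^-1` A `&` X2 @^-1` B) = (P (X1 @^-1` A) * P (X2 @^-1` B))%E.

(* the law of X is the normalised Haar measure on the compact group G:
   a Borel probability measure carried by G and invariant under translations by G *)
Definition law_is_haar (d : measure_display) (O : measurableType d) (P : probability O R)
  (X : O -> E) (G : set E) : Prop :=
  P (X @^-1` G) = 1%E /\
  forall g, G g -> forall B, mborel (distE n) B ->
    P (X @^-1` [set x | B (x - g)]) = P (X @^-1` B).
End RV.

Definition orthonormal (R : realType) (K : fieldType) (a : K -> R) (v1 v2 : K * K) : Prop :=
  Num.max (a v1.1) (a v1.2) = 1 /\ Num.max (a v2.1) (a v2.2) = 1 /\
  forall c1 c2 : K,
    Num.max (a (c1 * v1.1 + c2 * v2.1)) (a (c1 * v1.2 + c2 * v2.2)) = Num.max (a c1) (a c2).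

Definition K_gaussian (R : realType) (K : fieldType) (a : K -> R) (E : lmodType K) (n : E -> R)
  (d : measure_display) (O : measurableType d) (P : probability O R) (X : O -> E) : Prop :=
  forall (d' : measure_display) (O' : measurableType d') (P' : probability O' R) (X1 X2 : O' -> E),
    rvE n X1 -> rvE n X2 -> same_law n P X P' X1 -> same_law n P X P' X2 -> indepE n P' X1 X2 ->
    forall a11 a12 a21 a22 : K, orthonormal a (a11, a12) (a21, a22) ->
    forall C, mborel (distE2 n) C ->
      P' ((fun w => (a11 *: X1 w + a12 *: X2 w, a21 *: X1 w + a22 *: X2 w)) @^-1` C) =
      P' ((fun w => (X1 w, X2 w)) @^-1` C).

From Pilot Require Import Defs.
From HB Require Import structures.
From mathcomp Require Import all_boot all_order all_algebra.
From mathcomp Require Import all_classical all_reals all_analysis ess_sup_inf.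
From mathcomp Require Import ring lra.
Set Implicit Arguments. Unset Strict Implicit. Unset Printing Implicit Defensive.
Import Order.TTheory GRing.Theory Num.Theory.
Local Open Scope classical_set_scope.
Local Open Scope ring_scope.

(* Since [E] is separable and ultrametric, the open balls of [E * E] for the max distance
   form, with [set0], a pi-system generating the Borel sets, so the law of a pair
   [(X1, X2)] of independent copies of [X] is determined by its values on balls. A ball of
   radius [r] has mass [h(r)^2] if it meets [G * G] and [0] otherwise, [h(r)] being the
   Haar mass of a ball of radius [r] centred in [G]. An orthonormal matrix and its inverse
   have entries in [D], so they act on [E * E] as mutually inverse isometries preserving
   [G * G]; they thus permute the balls, preserving both the radius and meeting [G * G].

   Haar measure charges every ball centred in [G], since finitely many translates of it
   cover the compact set [G]; by continuity [|T x| <= |T X|_oo] on [G]. A point [x] outside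
   [G] lies outside the [D]-module [V] of points at distance [< r] from [G], for some
   [r > 0]. Closed balls of [K] are compact, so [K] is spherically complete, and Ingleton's
   Hahn-Banach theorem extends [l x |-> l / p], with [p] a uniformizer, to a functional
   bounded by [1] on [V]; it is continuous, bounded by [1] on the support [G] of the law,
   and [|T x| = 1 / |p| > 1]. *)

Section MetricCompact.
Variables (R : realType) (T : Type) (d : T -> T -> R).

Lemma mborel_open U : mopen d U -> mborel d U.
Proof. exact: sub_sigma_algebra. Qed.

Lemma mborelC A : mborel d A -> mborel d (~` A).
Proof.
have [_ mC _] := smallest_sigma_algebra setT (mopen d).
by move=> /mC; rewrite setTD.
Qed.

Lemma mopenU U V : mopen d U -> mopen d V -> mopen d (U `|` V).
Proof.
move=> oU oV x [/oU|/oV] [r [r0 hr]]; exists r; split => // y /hr; by [left|right].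
Qed.

Lemma mcompact_subset_closed C A :
  mcompact d C -> A `<=` C -> mopen d (~` A) -> mcompact d A.
Proof.
move=> cC AC oA F Fo AF.
have FAo : F `|` [set ~` A] `<=` mopen d by move=> U [/Fo|->].
have CFA : C `<=` \bigcup_(U in F `|` [set ~` A]) U.
  move=> x Cx; have [/AF [U FU Ux]|nAx] := pselect (A x).
    by exists U => //; left.
  by exists (~` A) => //; right.
have [s [sF Cs]] := cC _ FAo CFA.
exists [seq U <- s | `[< F U >]]; split.
  by move=> U; rewrite mem_filter => /andP [/asboolP].
move=> x Ax; have [U Us Ux] := Cs x (AC x Ax).
exists U => //; rewrite mem_filter Us andbT; apply/asboolP.
by have [//|eU] := sF U Us; move: Ux; rewrite eU.
Qed.

Lemma mcompact_image (T' : Type) (d' : T' -> T' -> R) (f : T -> T') A :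
  (forall U, mopen d' U -> mopen d (f @^-1` U)) -> mcompact d A ->
  mcompact d' (f @` A).
Proof.
move=> fc cA F Fo AF.
pose F1 := [set f @^-1` U | U in F].
have F1o : F1 `<=` mopen d by move=> _ [U FU <-]; exact: fc (Fo _ FU).
have AF1 : A `<=` \bigcup_(W in F1) W.
  move=> x Ax; have [U FU Ux] := AF (f x) (imageP f Ax).
  by exists (f @^-1` U) => //; exists U.
have [s [sF1 As]] := cA _ F1o AF1.
have /choice [g gP] : forall W, exists U, F1 W -> F U /\ W = f @^-1` U.
  move=> W; have [[U FU eW]|nW] := pselect (F1 W); last by exists setT.
  by exists U => _; split.
exists (map g s); split.
  by move=> _ /mapP [W Ws ->]; have [] := gP W (sF1 W Ws).
move=> _ [x Ax <-]; have [W Ws Wx] := As x Ax.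
exists (g W); first exact: map_f.
by have [_ eW] := gP W (sF1 W Ws); move: Wx; rewrite {1}eW.
Qed.

Lemma mcompact_directed_cover C (F : set (set T)) U0 :
  mcompact d C -> F `<=` mopen d -> C `<=` \bigcup_(U in F) U -> F U0 ->
  (forall U V, F U -> F V -> exists2 W, F W & U `|` V `<=` W) ->
  exists2 W, F W & C `<=` W.
Proof.
move=> cC Fo CF FU0 Fdir.
have [s [sF Cs]] := cC F Fo CF.
suff [W FW sW] : exists2 W, F W & forall U, U \in s -> U `<=` W.
  by exists W => // x /Cs [U /sW]; apply.
elim: s sF {Cs} => [|U s IH] sF; first by exists U0.
have [|W FW sW] := IH; first by move=> V Vs; apply: sF; rewrite in_cons Vs orbT.
have [W' FW' UW'] := Fdir U W (sF U (mem_head U s)) FW.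
exists W' => // V; rewrite in_cons => /predU1P [->|/sW VW] x Vx; apply: UW'.
  by left.
by right; exact: VW.
Qed.

End MetricCompact.

Definition ultrametric (R : realType) (T : Type) (d : T -> T -> R) :=
  [/\ forall x y, d x y = 0 <-> x = y, forall x y, d x y = d y x &
      forall x y z, d x z <= Num.max (d x y) (d y z)].

Definition mball (R : realType) (T : Type) (d : T -> T -> R) (c : T) (r : R) :=
  [set y | d c y < r].
Definition mcball (R : realType) (T : Type) (d : T -> T -> R) (c : T) (r : R) :=
  [set y | d c y <= r].

Definition mball_system (R : realType) (T : Type) (d : T -> T -> R) :=
  [set B | B = set0 \/ exists c r, 0 < r /\ B = mball d c r].

Section Ultrametric.
Variables (R : realType) (T : Type) (d : T -> T -> R) (hd : ultrametric d).

Lemma um_eq0 x y : d x y = 0 <-> x = y. Proof. by case: hd. Qed.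
Lemma um_sym x y : d x y = d y x. Proof. by case: hd. Qed.
Lemma um_max x y z : d x z <= Num.max (d x y) (d y z). Proof. by case: hd. Qed.
Lemma um_xx x : d x x = 0. Proof. exact/um_eq0. Qed.

Lemma um_ge0 x y : 0 <= d x y.
Proof. by have := um_max x y x; rewrite um_xx [d y x]um_sym maxxx. Qed.

Lemma um_cases x y z : d x z <= d x y \/ d x z <= d y z.
Proof. by have := um_max x y z; rewrite le_max => /orP. Qed.

Lemma mball_open c r : mopen d (mball d c r).
Proof.
rewrite /mball => y /= cy; exists r; split => [|z yz /=]; first by have := um_ge0 c y; lra.
by case: (um_cases c y z) => h; lra.
Qed.

Lemma mball_closed c r : mopen d (~` mball d c r).
Proof.
move=> y /negP; rewrite /mball /= -leNgt => ry.
have [r0|r0] := ltrP 0 r.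
  exists r; split => // z yz /= czr.
  by case: (um_cases c z y) => h; rewrite um_sym in yz; lra.
by exists 1; split => // z _ /=; have := um_ge0 c z; lra.
Qed.

Lemma mcball_closed c r : mopen d (~` mcball d c r).
Proof.
move=> y /negP; rewrite /mcball /= -ltNge => ry.
exists (d c y - r); split; first lra.
move=> z yz /= czr; have := um_ge0 c z.
by case: (um_cases c z y) => h; rewrite um_sym in yz; lra.
Qed.

Lemma mcball_center c r : 0 <= r -> mcball d c r c.
Proof. by rewrite /mcball /= um_xx. Qed.

Lemma mball_center c r q : mball d c r q -> mball d q r = mball d c r.
Proof.
rewrite /mball /= => cq; apply/seteqP; split => z /= hz.
  by case: (um_cases c q z) => h; lra.
by have := um_sym q c; case: (um_cases q c z) => h; lra.
Qed.

Lemma mcball_subset c r c' r' : d c' c <= r' -> r <= r' ->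
  mcball d c r `<=` mcball d c' r'.
Proof. by move=> cc' rr' z; rewrite /mcball /=; case: (um_cases c' c z) => h; lra. Qed.

Lemma mcompact_dist_gt0 G x : mcompact d G -> ~ G x ->
  exists2 r, 0 < r & forall y, d x y < r -> ~ G y.
Proof.
move=> cG nGx.
pose F := [set ~` mcball d x r | r in [set r | 0 < r]].
have Fo : F `<=` mopen d by move=> _ [r _ <-]; exact: mcball_closed.
have GF : G `<=` \bigcup_(U in F) U.
  move=> g Gg; have xg : 0 < d x g.
    by rewrite lt_def um_ge0 andbT; apply/eqP => /um_eq0 xg; apply: nGx; rewrite xg.
  exists (~` mcball d x (d x g / 2)); first by exists (d x g / 2) => //=; lra.
  by rewrite /mcball /=; lra.
have F1 : F (~` mcball d x 1) by exists 1%R => //; exact: ltr01.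
have [|W [r r0 <-] GW] := mcompact_directed_cover cG Fo GF F1.
  move=> _ _ [r1 r10 <-] [r2 r20 <-]; exists (~` mcball d x (Num.min r1 r2)).
    by exists (Num.min r1 r2) => //=; rewrite lt_min r10.
  by rewrite -setCI; apply: subsetC => z; rewrite /mcball /= le_min => /andP.
by exists r => // y xy /GW; rewrite /mcball /=; lra.
Qed.

Lemma mcompact_mborel G : mcompact d G -> mborel d G.
Proof.
move=> cG; rewrite -(setCK G); apply: mborelC; apply: mborel_open => x nGx.
have [r r0 hr] := mcompact_dist_gt0 cG nGx.
by exists r; split => // y /hr.
Qed.

Lemma mball_system_setI : setI_closed (mball_system d).
Proof.
move=> A B [->|[c [r [r0 ->]]]]; first by left; rewrite set0I.
move=> [->|[c' [r' [r0' ->]]]]; first by left; rewrite setI0.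
have [[q [cq c'q]]|nq] := pselect (exists q, mball d c r q /\ mball d c' r' q); last first.
  by left; apply/seteqP; split => // z [cz c'z]; apply: nq; exists z.
right; rewrite -(mball_center cq) -(mball_center c'q).
have [rr'|r'r] := lerP r r'.
  exists q, r; split => //; apply/setIidl => z; rewrite /mball /=; lra.
exists q, r'; split => //; apply/setIidr => z; rewrite /mball /=; lra.
Qed.

Lemma mborel_sub_mball_system : mseparable d -> mborel d `<=` <<s mball_system d >>.
Proof.
move=> [u hu]; apply: smallest_sub; first exact: smallest_sigma_algebra.
move=> U oU; have [_ _ sU] := smallest_sigma_algebra setT (mball_system d).
pose B i k := mball d (u i) k.+1%:R^-1.
pose A k i := if pselect (B i k `<=` U) then B i k else set0.
have UA : U = \bigcup_k \bigcup_i A k i.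
  apply/seteqP; split; last first.
    by move=> p [k _ [i _]]; rewrite /A; case: pselect => [/[apply]|_ []].
  move=> p Up; have [r [r0 pr]] := oU p Up.
  have [k] := ltr_add_invr r0; rewrite add0r => kr.
  have e0 : 0 < k.+1%:R^-1 :> R by rewrite invr_gt0 ltr0Sn.
  have [i pui] := hu p _ e0.
  have Bp : B i k p by rewrite /B /mball /= um_sym.
  exists k => //; exists i => //; rewrite /A; case: pselect => [//|[]].
  rewrite /B -(mball_center Bp) => y; rewrite /mball /= => py.
  by apply: pr; exact: lt_trans py kr.
rewrite UA; apply: (sU) => k; apply: (sU) => i; apply: sub_sigma_algebra.
rewrite /A; case: pselect => Bk; [right; exists (u i), k.+1%:R^-1; split => //|by left].
Qed.

End Ultrametric.
Arguments mcball_center {R T d} hd c {r}.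
Arguments mball_open {R T d} hd {c r}.

Definition dist_prod (R : realType) (T1 T2 : Type) (d1 : T1 -> T1 -> R)
  (d2 : T2 -> T2 -> R) (p q : T1 * T2) : R :=
  Num.max (d1 p.1 q.1) (d2 p.2 q.2).

Section UltrametricProd.
Variables (R : realType) (T1 T2 : Type) (d1 : T1 -> T1 -> R) (d2 : T2 -> T2 -> R).

Lemma ultrametric_prod : ultrametric d1 -> ultrametric d2 -> ultrametric (dist_prod d1 d2).
Proof.
move=> h1 h2; split => [[x1 x2] [y1 y2]|p q|p q r]; rewrite /dist_prod /=.
- split=> [|[-> ->]]; last by rewrite (um_xx h1) (um_xx h2) maxxx.
  move=> /eqP; rewrite eq_le ge_max => /andP [/andP [xy1 xy2] _].
  have e1 : d1 x1 y1 = 0 by apply/eqP; rewrite eq_le xy1 um_ge0.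
  have e2 : d2 x2 y2 = 0 by apply/eqP; rewrite eq_le xy2 um_ge0.
  by rewrite (um_eq0 h1 x1 y1).1 // (um_eq0 h2 x2 y2).1.
- by rewrite (um_sym h1) (um_sym h2).
- by rewrite maxACA; exact: le_max2 (um_max h1 _ _ _) (um_max h2 _ _ _).
Qed.

Lemma mseparable_prod : mseparable d1 -> mseparable d2 -> mseparable (dist_prod d1 d2).
Proof.
move=> [u1 hu1] [u2 hu2].
exists (fun m => if unpickle m is Some (i, j) then (u1 i, u2 j) else (u1 0, u2 0)).
move=> p e e0; have [i pi] := hu1 p.1 e e0; have [j pj] := hu2 p.2 e e0.
by exists (pickle (i, j)); rewrite pickleK /dist_prod gt_max pi pj.
Qed.
End UltrametricProd.

Section NonarchAbs.
Variables (R : realType) (K : fieldType) (a : K -> R) (ha : nonarch_abs a).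

Lemma nabs_ge0 x : 0 <= a x. Proof. by case: ha. Qed.
Lemma nabs_eq0 x : a x = 0 <-> x = 0. Proof. by case: ha. Qed.
Lemma nabsM x y : a (x * y) = a x * a y. Proof. by case: ha. Qed.
Lemma nabsD x y : a (x + y) <= Num.max (a x) (a y). Proof. by case: ha. Qed.
Lemma nabs0 : a 0 = 0. Proof. exact/nabs_eq0. Qed.

Lemma nabs_gt0 x : x != 0 -> 0 < a x.
Proof. by move=> x0; rewrite lt_def nabs_ge0 andbT; apply: contra x0 => /eqP/nabs_eq0 ->. Qed.

Lemma nabs1 : a 1 = 1.
Proof.
have := nabsM 1 1; rewrite mulr1 => a11.
by apply: (mulfI (lt0r_neq0 (nabs_gt0 (oner_neq0 K)))); rewrite mulr1 -a11.
Qed.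

Lemma nabsN1 : a (-1) = 1.
Proof. by have := nabsM (-1) (-1); rewrite mulrNN mulr1 nabs1; have := nabs_ge0 (-1); nra. Qed.

Lemma nabsN x : a (- x) = a x. Proof. by rewrite -mulN1r nabsM nabsN1 mul1r. Qed.

Lemma nabsV x : a x^-1 = (a x)^-1.
Proof.
have [->|x0] := eqVneq x 0; first by rewrite invr0 nabs0 invr0.
have ax0 : a x != 0 := lt0r_neq0 (nabs_gt0 x0).
by apply: (mulfI ax0); rewrite -nabsM !divff // nabs1.
Qed.

Lemma nabsD_eq x y : a x < a y -> a (x + y) = a y.
Proof.
move=> xy; have := nabsD x y; have := nabsD (y + x) (- x).
by rewrite addrK nabsN [y + x]addrC !le_max => /orP [] h1 /orP [] h2; lra.
Qed.

Lemma ultranorm_regular : ultranorm a (a : K^o -> R).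
Proof. by split; [exact: nabs_ge0 | exact: nabs_eq0 | exact: nabsM | exact: nabsD]. Qed.
End NonarchAbs.

Section UltraNorm.
Variables (R : realType) (K : fieldType) (a : K -> R) (ha : nonarch_abs a).
Variables (E : lmodType K) (n : E -> R) (hn : ultranorm a n).

Lemma unorm_ge0 x : 0 <= n x. Proof. by case: hn. Qed.
Lemma unorm_eq0 x : n x = 0 <-> x = 0. Proof. by case: hn. Qed.
Lemma unormZ c x : n (c *: x) = a c * n x. Proof. by case: hn. Qed.
Lemma unormD x y : n (x + y) <= Num.max (n x) (n y). Proof. by case: hn. Qed.
Lemma unorm0 : n 0 = 0. Proof. exact/unorm_eq0. Qed.
Lemma unormN x : n (- x) = n x. Proof. by rewrite -scaleN1r unormZ (nabsN1 ha) mul1r. Qed.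

Lemma unormZ_le c x : a c <= 1 -> n (c *: x) <= n x.
Proof. by move=> c1; rewrite unormZ ler_piMl // unorm_ge0. Qed.

Lemma ultrametric_distE : ultrametric (distE n).
Proof.
split => [x y|x y|x y z]; rewrite /distE.
- split => [/unorm_eq0/eqP|->]; last by rewrite subrr unorm0.
  by rewrite subr_eq0 => /eqP.
- by rewrite -opprB unormN.
- by have := unormD (x - y) (y - z); rewrite addrA subrK.
Qed.

Lemma ultrametric_distE2 : ultrametric (distE2 n).
Proof. exact: ultrametric_prod ultrametric_distE ultrametric_distE. Qed.

Lemma D_submodule_thicken G r : D_submodule a G -> 0 < r ->
  D_submodule a [set v | exists2 g, G g & distE n g v < r].
Proof.
case=> G0 Gadd Gscale r0; split.
- by exists 0 => //; rewrite /distE subrr unorm0.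
- move=> u v [g1 G1 gu] [g2 G2 gv]; exists (g1 + g2); first exact: Gadd.
  by rewrite /distE opprD addrACA; apply: le_lt_trans (unormD _ _) _; rewrite gt_max gu gv.
- move=> k u k1 [g Gg gu]; exists (k *: g); first exact: Gscale.
  by rewrite /distE -scalerBr; apply: le_lt_trans (unormZ_le _ k1) gu.
Qed.
End UltraNorm.

Lemma ultrametric_distK (R : realType) (K : fieldType) (a : K -> R) :
  nonarch_abs a -> ultrametric (distK a).
Proof.
by move=> ha; exact: (ultrametric_distE ha (ultranorm_regular ha) : ultrametric (distK a)).
Qed.

Section LocalField.
Variables (R : realType) (K : fieldType) (a : K -> R) (hK : local_field a).
Let ha : nonarch_abs a. Proof. by case: hK. Qed.
Let hd : ultrametric (distK a) := ultrametric_distK ha.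

Lemma nabs_small r : 0 < r -> exists2 z, z != 0 & a z < r.
Proof.
move=> r0; apply: contrapT => nosmall; case: hK => _ _ ND _; apply: ND => x y ->.
exists r; split => // w xw; apply: contrapT => wx; apply: nosmall; exists (x - w) => //.
by rewrite subr_eq0; apply/eqP => /esym.
Qed.

Lemma mcball_compact c r : mcompact (distK a) (mcball (distK a) c r).
Proof.
case: hK => _ LC _ _; have [C [cC [r0 [r00 C0]]]] := LC 0.
have r1 : 0 < `|r| + 1 by rewrite ltr_pwDr ?normr_ge0.
have [z z0 zr] := nabs_small (divr_gt0 r00 r1).
have az0 := nabs_gt0 ha z0.
have azr : a z * r < r0.
  rewrite ltr_pdivlMr // in zr; apply: le_lt_trans zr.
  by rewrite ler_pM2l // (le_trans (ler_norm r)) // lerDl.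
pose A := mcball (distK a) 0 (a z * r).
have cA : mcompact (distK a) A.
  apply: (mcompact_subset_closed cC); last exact: mcball_closed.
  by move=> w Aw; apply: C0; rewrite /A /mcball /= in Aw; lra.
have -> : mcball (distK a) c r = (fun w => c - w / z) @` A.
  apply/seteqP; split => [v cv|_ [w Aw <-]].
    exists (z * (c - v)); last by rewrite [z * _]mulrC mulfK // opprB addrC subrK.
    by rewrite /A /mcball /distK /= sub0r (nabsN ha) (nabsM ha) ler_pM2l.
  move: Aw; rewrite /A /mcball /distK /= sub0r opprB addrC subrK.
  by rewrite (nabsN ha) (nabsM ha) (nabsV ha) ler_pdivrMr // mulrC.
apply: (mcompact_image _ cA) => U oU w Uw.
have [e [e0 he]] := oU _ Uw.
exists (e * a z); split => [|y wy]; first exact: mulr_gt0.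
apply: he; rewrite /distK.
have -> : c - w / z - (c - y / z) = - (w - y) / z by ring.
by rewrite (nabsM ha) (nabsN ha) (nabsV ha) ltr_pdivrMr.
Qed.

Lemma uniformizer : exists2 p, 0 < a p < 1 & forall l, a l < 1 -> a l <= a p.
Proof.
suff [p p1 pmax] : exists2 p, a p < 1 & forall l, a l < 1 -> a l <= a p.
  exists p => //; rewrite p1 andbT.
  have [z z0 z1] := nabs_small ltr01.
  exact: lt_le_trans (nabs_gt0 ha z0) (pmax z z1).
apply: contrapT => nomax.
have above p : a p < 1 -> exists2 l, a l < 1 & a p < a l.
  move=> p1; apply: contrapT => nl; apply: nomax; exists p => // l l1.
  by rewrite leNgt; apply/negP => pl; apply: nl; exists l.
have distK0 w : distK a 0 w = a w by rewrite /distK sub0r (nabsN ha).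
pose S := ~` mball (distK a) 0 1.
pose F := [set S `|` mball (distK a) 0 (a l) | l in [set l | a l < 1]].
have Fo : F `<=` mopen (distK a).
  by move=> _ [l _ <-]; apply: mopenU; [exact: mball_closed | exact: mball_open].
have cover : mcball (distK a) 0 1 `<=` \bigcup_(U in F) U.
  move=> w _; have [w1|w1] := lerP 1 (a w).
    exists (S `|` mball (distK a) 0 (a 0)); first by exists 0; rewrite //= (nabs0 ha).
    by left; rewrite /S /mball /= distK0; apply/negP; rewrite -leNgt.
  have [l l1 wl] := above w w1.
  by exists (S `|` mball (distK a) 0 (a l)); [exists l | right; rewrite /mball /= distK0].
have F0 : F (S `|` mball (distK a) 0 (a 0)) by exists 0; rewrite //= (nabs0 ha).
have [|_ [l l1 <-] sub] := mcompact_directed_cover (@mcball_compact 0 1) Fo cover F0.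
  move=> _ _ [l1 l11 <-] [l2 l21 <-].
  wlog le12 : l1 l2 l11 l21 / a l1 <= a l2.
    by move=> wl; have [/wl|/ltW/wl] := lerP (a l1) (a l2); [apply | rewrite setUC; apply].
  exists (S `|` mball (distK a) 0 (a l2)); first by exists l2.
  move=> w [[Sw|lw]|//]; [by left | right].
  by rewrite /mball /= in lw *; lra.
have := sub l; rewrite /S /mcball /mball /= !distK0 => /(_ (ltW l1)).
by case=> [/(_ l1)|]; rewrite ?ltxx.
Qed.

Lemma spherically_complete (Q : K -> R -> Prop) :
  (forall c1 r1 c2 r2, Q c1 r1 -> Q c2 r2 -> distK a c1 c2 <= Num.max r1 r2) ->
  exists t, forall c r, Q c r -> mcball (distK a) c r t.
Proof.
move=> QQ; have [[c0 [r0 Q0]]|noQ] := pselect (exists c r, Q c r); last first.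
  by exists 0 => c r Qcr; exfalso; apply: noQ; exists c, r.
have Qge0 c r : Q c r -> 0 <= r.
  by move=> Qcr; have := QQ _ _ _ _ Qcr Qcr; rewrite um_xx // maxxx.
have Qsub c1 r1 c2 r2 : Q c1 r1 -> Q c2 r2 -> r1 <= r2 ->
    mcball (distK a) c1 r1 `<=` mcball (distK a) c2 r2.
  by move=> Q1 Q2 r12; apply: mcball_subset => //; have := QQ _ _ _ _ Q2 Q1; rewrite max_l.
apply: contrapT => nocommon.
pose F := [set ~` mcball (distK a) p.1 p.2 | p in [set p | Q p.1 p.2]].
have Fo : F `<=` mopen (distK a) by move=> _ [p _ <-]; exact: mcball_closed.
have cover : mcball (distK a) c0 r0 `<=` \bigcup_(U in F) U.
  move=> t _; apply: contrapT => nt; apply: nocommon; exists t => c r Qcr.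
  by apply: contrapT => ct; apply: nt; exists (~` mcball (distK a) c r) => //; exists (c, r).
have F0 : F (~` mcball (distK a) c0 r0) by exists (c0, r0).
have [|_ [[c r] /= Qcr <-] sub] := mcompact_directed_cover (@mcball_compact c0 r0) Fo cover F0.
  move=> _ _ [[c1 r1] /= Q1 <-] [[c2 r2] /= Q2 <-].
  wlog r12 : c1 r1 c2 r2 Q1 Q2 / r1 <= r2.
    by move=> wl; have [/wl|/ltW/wl] := lerP r1 r2; [apply | rewrite setUC; apply].
  exists (~` mcball (distK a) c1 r1); first by exists (c1, r1).
  by move=> t [//|nt c1t]; apply: nt; exact: Qsub Q1 Q2 r12 _ c1t.
have cc := mcball_center hd c (Qge0 _ _ Qcr).
have c0c0 := mcball_center hd c0 (Qge0 _ _ Q0).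
have [rr0|r0r] := lerP r r0.
  by apply: (sub c _ cc); exact: Qsub Qcr Q0 rr0 _ cc.
by apply: (sub c0 c0c0); exact: Qsub Q0 Qcr (ltW r0r) _ c0c0.
Qed.
End LocalField.

Section Ingleton.
Variables (R : realType) (K : fieldType) (a : K -> R) (hK : local_field a).
Let ha : nonarch_abs a. Proof. by case: hK. Qed.
Let hd : ultrametric (distK a) := ultrametric_distK ha.
Variables (E : lmodType K) (V : set E) (hV : D_submodule a V).

Definition bounded_linear_graph (A : set (E * K)) :=
  [/\ forall u s v t k, A (u, s) -> A (v, t) -> A (k *: u + v, k * s + t),
      forall u s t, A (u, s) -> A (u, t) -> s = t &
      forall u s, A (u, s) -> V u -> a s <= 1].

Lemma bounded_linear_graph_bigcup (F : set (set (E * K))) :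
  F `<=` bounded_linear_graph -> total_on F subset ->
  bounded_linear_graph (\bigcup_(A in F) A).
Proof.
move=> Fg Ftot; split.
- move=> u s v t k [A1 FA1 A1us] [A2 FA2 A2vt].
  have [A12|A21] := Ftot _ _ FA1 FA2.
    by exists A2 => //; case: (Fg _ FA2) => lin _ _; apply: lin => //; exact: A12.
  by exists A1 => //; case: (Fg _ FA1) => lin _ _; apply: lin => //; exact: A21.
- move=> u s t [A1 FA1 A1us] [A2 FA2 A2ut].
  have [A12|A21] := Ftot _ _ FA1 FA2.
    by case: (Fg _ FA2) => _ fun2 _; apply: fun2 A2ut; exact: A12.
  by case: (Fg _ FA1) => _ fun1 _; apply: fun1 A1us _; exact: A21.
- by move=> u s [A1 FA1 A1us] Vu; case: (Fg _ FA1) => _ _ bd; exact: bd A1us Vu.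
Qed.

Section Extension.
Variables (A : set (E * K)) (hA : bounded_linear_graph A) (A00 : A (0, 0)).

Definition admissible_value y t := forall z s mu v,
  A (z, s) -> V v -> mu != 0 -> y - z = mu *: v -> distK a s t <= a mu.

Definition graph_adjoin y t :=
  [set p | exists u s l, A (u, s) /\ p = (u + l *: y, s + l * t)].

Lemma graph_scale u s k : A (u, s) -> A (k *: u, k * s).
Proof. by case: hA => lin _ _ uA; have := lin _ _ _ _ k uA A00; rewrite !addr0. Qed.

Lemma graph_sub u s v t : A (u, s) -> A (v, t) -> A (v - u, t - s).
Proof.
case: hA => lin _ _ uA vA; have := lin _ _ _ _ (-1) uA vA.
by rewrite scaleN1r mulN1r ![- _ + _]addrC.
Qed.

Lemma graph_dist_le y z1 s1 mu1 v1 z2 s2 mu2 v2 :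
  A (z1, s1) -> A (z2, s2) -> V v1 -> V v2 -> mu2 != 0 -> a mu1 <= a mu2 ->
  y - z1 = mu1 *: v1 -> y - z2 = mu2 *: v2 -> distK a s1 s2 <= a mu2.
Proof.
move=> A1 A2 V1 V2 mu20 mu12 e1 e2; have mu2gt0 := nabs_gt0 ha mu20.
case: hV => _ Vadd Vscale; case: hA => _ _ bd.
have Vw : V ((mu1 / mu2) *: v1 + (-1) *: v2).
  apply: Vadd; apply: Vscale => //; last by rewrite /unit_ball /= (nabsN1 ha).
  by rewrite /unit_ball /= (nabsM ha) (nabsV ha) ler_pdivrMr ?mul1r.
have zw : mu2^-1 *: (z2 - z1) = (mu1 / mu2) *: v1 + (-1) *: v2.
  have -> : z2 - z1 = (y - z1) - (y - z2) by apply/esym; rewrite opprB addrC addrA subrK.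
  by rewrite e1 e2 scalerBr !scalerA mulVf // scaleN1r scale1r mulrC.
rewrite (um_sym hd) /distK.
have := bd _ _ (graph_scale (mu2^-1) (graph_sub A1 A2)); rewrite zw => /(_ Vw).
by rewrite (nabsM ha) (nabsV ha) mulrC ler_pdivrMr // mul1r.
Qed.

Lemma admissible_value_exists y : exists t, admissible_value y t.
Proof.
pose Q c r := exists z mu v, [/\ A (z, c), V v, mu != 0, y - z = mu *: v & r = a mu].
have [|t ht] := @spherically_complete _ _ _ hK Q.
  move=> c1 r1 c2 r2 [z1 [mu1 [v1 [A1 V1 mu10 e1 ->]]]] [z2 [mu2 [v2 [A2 V2 mu20 e2 ->]]]].
  have [le12|/ltW le21] := lerP (a mu1) (a mu2).
    exact: graph_dist_le A1 A2 V1 V2 mu20 le12 e1 e2.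
  by rewrite (um_sym hd); exact: graph_dist_le A2 A1 V2 V1 mu10 le21 e2 e1.
by exists t => z s mu v As Vv mu0 e; apply: ht; exists z, mu, v.
Qed.

Lemma graph_adjoin_bounded y t : ~ (exists s, A (y, s)) -> admissible_value y t ->
  bounded_linear_graph (graph_adjoin y t).
Proof.
move=> ny ht; case: hA => lin functional bd; split.
- move=> _ _ _ _ k [u1 [s1 [l1 [A1 [-> ->]]]]] [u2 [s2 [l2 [A2 [-> ->]]]]].
  exists (k *: u1 + u2), (k * s1 + s2), (k * l1 + l2); split; first exact: lin.
  by congr (_, _); [rewrite scalerDr scalerA scalerDl addrACA | ring].
- move=> w _ _ [u1 [s1 [l1 [A1 [-> ->]]]]] [u2 [s2 [l2 [A2 [e12 ->]]]]].
  have [l12|l12] := eqVneq l1 l2.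
    rewrite -l12 in e12 *; have /addIr eu : u1 + l1 *: y = u2 + l1 *: y := e12.
    by rewrite -eu in A2; rewrite (functional _ _ _ A1 A2).
  exfalso; apply: ny; exists ((l1 - l2)^-1 * (s2 - s1)).
  suff <- : (l1 - l2)^-1 *: (u2 - u1) = y by exact/graph_scale/graph_sub.
  have -> : u2 - u1 = (l1 - l2) *: y.
    by rewrite -(addrKA (l2 *: y) u2 u1) -e12 [u1 + _]addrC opprD addrACA subrr addr0 scalerBl.
  by rewrite scalerA mulVf ?scale1r // subr_eq0.
- move=> _ _ [u [s [l [As [-> ->]]]]] Vw.
  have [l0|l0] := eqVneq l 0.
    by rewrite l0 scale0r mul0r !addr0 in Vw *; exact: bd As Vw.
  have := ht _ _ l^-1 _ (graph_scale (- l^-1) As) Vw (invr_neq0 l0).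
  rewrite scaleNr opprK scalerDr scalerA mulVf // scale1r addrC => /(_ erefl).
  have -> : s + l * t = - l * (- l^-1 * s - t) by field.
  rewrite /distK (nabsM ha) (nabsN ha) (nabsV ha) => h.
  by rewrite -(divff (lt0r_neq0 (nabs_gt0 ha l0))) ler_pM2l ?nabs_gt0.
Qed.
End Extension.

Theorem ingleton_extension x c0 : x != 0 -> (forall l, V (l *: x) -> a (l * c0) <= 1) ->
  exists F : E -> K, [/\ forall k u v, F (k *: u + v) = k * F u + F v,
    F x = c0 & forall u, V u -> a (F u) <= 1].
Proof.
move=> x0 xV.
(* [Zorn_bigcup] also needs [P] of the union of the empty chain, i.e. of [set0]. *)
pose P A := bounded_linear_graph A /\ (A = set0 \/ A (x, c0)).
pose line := [set p | exists l, p = (l *: x, l * c0)].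
have Pline : P line.
  split; last by right; exists 1; rewrite scale1r mul1r.
  split.
  - move=> _ _ _ _ k [l [-> ->]] [l' [-> ->]]; exists (k * l + l').
    by rewrite scalerA scalerDl mulrDl mulrA.
  - move=> _ _ _ [l [-> ->]] [l' [ell' ->]].
    move/eqP: ell'; rewrite -subr_eq0 -scalerBl scaler_eq0 (negbTE x0) orbF subr_eq0.
    by move=> /eqP ->.
  - by move=> _ _ [l [-> ->]]; exact: xV.
have [|A [[gA [A0|Ax]] maxA]] := Zorn_bigcup (P := P).
- move=> F FP Ftot; split; first by apply: bounded_linear_graph_bigcup => // A /FP [].
  have [[A FA Ax]|nAx] := pselect (exists2 A, F A & A (x, c0)); first by right; exists A.
  left; apply/seteqP; split => // p [A FA Ap].
  have [A0|Ax] := (FP A FA).2; first by rewrite A0 in Ap.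
  by exfalso; apply: nAx; exists A.
- exfalso; apply: (maxA line) Pline; rewrite A0; split => //.
  by move=> /(_ (x, c0)); apply; exists 1; rewrite scale1r mul1r.
have A00 : A (0, 0).
  by case: gA => lin _ _; have := lin _ _ _ _ (-1) Ax Ax; rewrite scaleN1r mulN1r !addNr.
have /choice [F FA] : forall y, exists s, A (y, s).
  move=> y; apply: contrapT => ny.
  have [t ht] := admissible_value_exists gA A00 y.
  apply: (maxA _ _ (conj (graph_adjoin_bounded gA A00 ny ht) _)).
    split=> [[u s] Aus|]; first by exists u, s, 0; rewrite scale0r mul0r !addr0.
    move=> A1A; apply: ny; exists t; apply: A1A.
    by exists 0, 0, 1; rewrite scale1r mul1r !add0r.
  by right; exists x, c0, 0; rewrite scale0r mul0r !addr0.
case: gA => lin functional bd; exists F; split.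
- by move=> k u v; apply: (functional (k *: u + v)); [exact: FA | exact: lin].
- exact: functional (FA x) Ax.
- by move=> u Vu; exact: bd (FA u) Vu.
Qed.
End Ingleton.

Section BoundedFunctional.
Variables (R : realType) (K : fieldType) (a : K -> R) (hK : local_field a).
Let ha : nonarch_abs a. Proof. by case: hK. Qed.
Variables (E : lmodType K) (n : E -> R) (hn : ultranorm a n).

Lemma dual_elt_bounded (F : E -> K) r :
  (forall k u v, F (k *: u + v) = k * F u + F v) -> 0 < r ->
  (forall v, n v < r -> a (F v) <= 1) -> dual_elt a n F.
Proof.
move=> Flin r0 Fb; split => // x e e0.
have F0 : F 0 = 0.
  have := Flin 1 0 0; rewrite scale1r addr0 mul1r => F00.
  by apply: (addrI (F 0)); rewrite addr0 -F00.
have FZ k u : F (k *: u) = k * F u by rewrite -[k *: u]addr0 Flin F0 addr0.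
have FB u v : F (u - v) = F u - F v by rewrite addrC -scaleN1r Flin mulN1r addrC.
have [z z0 ze] := nabs_small hK e0; have az0 := nabs_gt0 ha z0.
exists (r * a z) => [|y xy]; first exact: mulr_gt0.
have := Fb (z^-1 *: (x - y)); rewrite FZ (nabsM ha) (nabsV ha) (unormZ hn) (nabsV ha).
rewrite [_^-1 * n _]mulrC [_^-1 * a _]mulrC ler_pdivrMr // mul1r ltr_pdivrMr // FB.
move=> /(_ xy) xyz.
exact: le_lt_trans xyz ze.
Qed.
End BoundedFunctional.

Section HaarLaw.
Variables (R : realType) (K : fieldType) (a : K -> R) (ha : nonarch_abs a).
Variables (E : lmodType K) (n : E -> R) (hn : ultranorm a n).
Variables (G : set E) (cG : mcompact (distE n) G).
Variables (d : measure_display) (O : measurableType d) (P : probability O R) (X : O -> E).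
Hypotheses (hX : rvE n X) (hH : law_is_haar n P X G).
Let hd : ultrametric (distE n) := ultrametric_distE ha hn.

Let measurable_open U : mopen (distE n) U -> measurable (X @^-1` U).
Proof. by move=> /mborel_open /hX. Qed.

Let measurable_G : measurable (X @^-1` G).
Proof. exact: hX (mcompact_mborel hd cG). Qed.

Lemma haar_complement_null : P (X @^-1` (~` G)) = 0%E.
Proof.
rewrite -preimage_setC probability_setC //.
by case: hH => -> _; rewrite subee.
Qed.

Lemma haar_ball_translate g r : G g ->
  P (X @^-1` mball (distE n) g r) = P (X @^-1` mball (distE n) 0 r).
Proof.
case: hH => _ inv Gg; rewrite -(inv g Gg (mball (distE n) 0 r)).
  by congr (P (X @^-1` _)); apply/seteqP; split => z; rewrite /mball /distE /= sub0r opprB.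
exact: mborel_open (mball_open hd).
Qed.

Lemma haar_ball c r : P (X @^-1` mball (distE n) c r) =
  if `[< exists2 g, G g & mball (distE n) c r g >]
  then P (X @^-1` mball (distE n) 0 r) else 0%E.
Proof.
case: asboolP => [[g Gg cg]|nG]; first by rewrite -(mball_center hd cg) haar_ball_translate.
apply/eqP; rewrite eq_le measure_ge0 andbT -haar_complement_null.
apply: le_measure; rewrite ?inE; [exact: measurable_open (mball_open hd) | | ].
  exact: hX (mborelC (mcompact_mborel hd cG)).
by move=> w /= cw GXw; apply: nG; exists (X w).
Qed.

Lemma haar_ball_neq0 g r : G g -> 0 < r -> P (X @^-1` mball (distE n) g r) != 0%E.
Proof.
move=> Gg r0; apply/eqP => null.
pose F := [set U | mopen (distE n) U /\ P (X @^-1` U) = 0%E].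
have Fo : F `<=` mopen (distE n) by move=> U [].
have GF : G `<=` \bigcup_(U in F) U.
  move=> h Gh; exists (mball (distE n) h r); last by rewrite /mball /= (um_xx hd).
  split; first exact: mball_open.
  by rewrite haar_ball_translate // -(haar_ball_translate _ Gg).
have Fg : F (mball (distE n) g r) by split => //; exact: mball_open.
have [|U [oU nullU] GU] := mcompact_directed_cover cG Fo GF Fg.
  move=> U1 U2 [oU1 null1] [oU2 null2]; exists (U1 `|` U2) => //.
  split; first exact: mopenU.
  apply/eqP; rewrite eq_le measure_ge0 andbT preimage_setU.
  apply: le_trans (measureU2 P (measurable_open oU1) (measurable_open oU2)) _.
  by change (P (X @^-1` U1) + P (X @^-1` U2) <= 0)%E; rewrite null1 null2 adde0.
have : (P (X @^-1` G) <= P (X @^-1` U))%E.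
  apply: le_measure; rewrite ?inE; last by move=> w /GU.
    exact: measurable_G.
  exact: measurable_open.
by case: hH => -> _; rewrite nullU lee_fin ler10.
Qed.

Lemma ess_sup_le1 (T : E -> K) : (forall g, G g -> a (T g) <= 1) ->
  (ess_sup P (fun w => (a (T (X w)))%:E) <= 1%:E)%E.
Proof.
move=> T1; apply: ereal_inf_lbound; exists (X @^-1` (~` G)); split.
- exact: hX (mborelC (mcompact_mborel hd cG)).
- exact: haar_complement_null.
- by move=> w /= nTw GXw; apply: nTw; rewrite lee_fin T1.
Qed.

Lemma ess_sup_ge (T : E -> K) x : G x -> dual_elt a n T ->
  ((a (T x))%:E <= ess_sup P (fun w => (a (T (X w)))%:E))%E.
Proof.
move=> Gx [_ Tc]; apply/ereal_infP => y [N [mN PN sub]].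
rewrite leNgt; apply/negP => yTx.
have [del del0 near_x] : exists2 del : R, 0 < del &
    forall g, distE n x g < del -> (y < (a (T g))%:E)%E.
  have [Tx0|Tx0] := eqVneq (T x) 0.
    exists 1 => // g _; rewrite Tx0 (nabs0 ha) in yTx.
    by apply: lt_le_trans yTx _; rewrite lee_fin nabs_ge0.
  have [del del0 hdel] := Tc x _ (nabs_gt0 ha Tx0); exists del => // g xg.
  have := hdel g xg; rewrite -(nabsN ha) => /(nabsD_eq ha); rewrite opprB subrK => ->.
  exact: yTx.
have : (P (X @^-1` mball (distE n) x del) <= P N)%E.
  apply: le_measure; rewrite ?inE //; first exact: measurable_open (mball_open hd).
  by move=> w /near_x yXw; apply: sub => /=; rewrite leNgt yXw.
rewrite PN => ball0; apply: (negP (haar_ball_neq0 Gx del0)).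
by rewrite eq_le ball0 measure_ge0.
Qed.
End HaarLaw.

Section Separation.
Variables (R : realType) (K : fieldType) (a : K -> R) (hK : local_field a).
Let ha : nonarch_abs a. Proof. by case: hK. Qed.
Variables (E : lmodType K) (n : E -> R) (hn : ultranorm a n).
Variables (G : set E) (hG : D_submodule a G) (cG : mcompact (distE n) G).
Variables (d : measure_display) (O : measurableType d) (P : probability O R) (X : O -> E).
Hypotheses (hX : rvE n X) (hH : law_is_haar n P X G).
Let hd : ultrametric (distE n) := ultrametric_distE ha hn.

Lemma haar_separation x : ~ G x -> exists2 T : E -> K, dual_elt a n T &
  ~ ((a (T x))%:E <= ess_sup P (fun w => (a (T (X w)))%:E))%E.
Proof.
move=> nGx; have [r r0 farx] := mcompact_dist_gt0 hd cG nGx.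
pose V := [set v | exists2 g, G g & distE n g v < r].
have hV : D_submodule a V := D_submodule_thicken hn hG r0.
have GV g : G g -> V g by exists g; rewrite // /distE subrr (unorm0 hn).
have [p /andP [p0 p1] pmax] := uniformizer hK.
have pn0 : p != 0 by apply: contraTneq p0 => ->; rewrite (nabs0 ha) ltxx.
have x0 : x != 0 by apply: contra_notN nGx => /eqP ->; case: hG.
(* As [x] is not in [V], [l *: x] can be in [V] only if [|l| < 1], i.e. [|l| <= |p|]. *)
have xV l : V (l *: x) -> a (l * p^-1) <= 1.
  move=> Vlx; rewrite (nabsM ha) (nabsV ha) ler_pdivrMr // mul1r.
  apply: pmax; rewrite ltNge; apply/negP => l1.
  have l0 : l != 0 by apply: contraTneq l1 => ->; rewrite (nabs0 ha) ler10.
  case: hV => _ _ /(_ l^-1 _ _ Vlx); rewrite scalerA mulVf // scale1r.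
  case=> [|g Gg gx]; last by apply: (farx g) Gg; rewrite (um_sym hd).
  by rewrite /unit_ball /= (nabsV ha) invf_le1 // (nabs_gt0 ha).
have [F [Flin Fx FV]] := ingleton_extension hK hV x0 xV.
exists F.
  apply: (dual_elt_bounded hK hn Flin r0) => v nv; apply: FV.
  by exists 0; [case: hG | rewrite /distE sub0r (unormN ha hn)].
move=> /le_trans /(_ (ess_sup_le1 ha hn cG hX hH (fun g Gg => FV g (GV g Gg)))).
by rewrite Fx lee_fin (nabsV ha) invf_le1 ?(nabs_gt0 ha) // leNgt p1.
Qed.
End Separation.

Lemma preimage_law_eq_dynkin (R : realType) (d : measure_display) (O : measurableType d)
  (P : probability O R) (T : Type) (f g : O -> T) :
  dynkin [set C | [/\ measurable (f @^-1` C), measurable (g @^-1` C) &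
    P (f @^-1` C) = P (g @^-1` C)]].
Proof.
split.
- by split; [exact: measurableT | exact: measurableT | rewrite !preimage_setT].
- move=> C [mf mg e] /=; rewrite -!preimage_setC.
  split; [exact: measurableC | exact: measurableC |].
  by rewrite !probability_setC // e.
- move=> F tF hF /=; rewrite !preimage_bigcup.
  have mf k : measurable (f @^-1` F k) by case: (hF k).
  have mg k : measurable (g @^-1` F k) by case: (hF k).
  have tpre (h : O -> T) : trivIset setT (fun k => h @^-1` F k).
    by move=> i j _ _ [w [Fi Fj]]; apply: tF => //; exists (h w).
  split; [exact: bigcupT_measurable | exact: bigcupT_measurable |].
  rewrite !measure_bigcup //; apply: eq_eseriesr => k _; by case: (hF k).
Qed.

Section LinearPairs.
Variables (R : realType) (K : fieldType) (a : K -> R) (ha : nonarch_abs a).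
Variables (E : lmodType K) (n : E -> R) (hn : ultranorm a n).

Definition lin2 (b11 b12 b21 b22 : K) (p : E * E) : E * E :=
  (b11 *: p.1 + b12 *: p.2, b21 *: p.1 + b22 *: p.2).
Arguments lin2 : simpl never.

Definition entries_in_D (b11 b12 b21 b22 : K) :=
  [/\ a b11 <= 1, a b12 <= 1, a b21 <= 1 & a b22 <= 1].

Lemma lin2_comp c11 c12 c21 c22 b11 b12 b21 b22 p :
  lin2 c11 c12 c21 c22 (lin2 b11 b12 b21 b22 p) =
  lin2 (c11 * b11 + c12 * b21) (c11 * b12 + c12 * b22)
       (c21 * b11 + c22 * b21) (c21 * b12 + c22 * b22) p.
Proof.
have comb (x y g1 g2 h1 h2 : K) (u v : E) :
    x *: (g1 *: u + g2 *: v) + y *: (h1 *: u + h2 *: v) =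
    (x * g1 + y * h1) *: u + (x * g2 + y * h2) *: v.
  by rewrite !scalerDr !scalerA addrACA -!scalerDl.
by rewrite /lin2 /= !comb.
Qed.

Lemma lin2_id p : lin2 1 0 0 1 p = p.
Proof. by case: p => u v; rewrite /lin2 /= !scale1r !scale0r addr0 add0r. Qed.

Lemma lin2_dist_le b11 b12 b21 b22 p q : entries_in_D b11 b12 b21 b22 ->
  distE2 n (lin2 b11 b12 b21 b22 p) (lin2 b11 b12 b21 b22 q) <= distE2 n p q.
Proof.
move=> [k11 k12 k21 k22].
have comb_le (c1 c2 : K) (u v : E) : a c1 <= 1 -> a c2 <= 1 ->
    n (c1 *: u + c2 *: v) <= Num.max (n u) (n v).
  move=> c11 c21; apply: le_trans (unormD hn _ _) _.
  exact: le_max2 (unormZ_le hn _ c11) (unormZ_le hn _ c21).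
have comb_sub (c1 c2 : K) (u v u' v' : E) :
    (c1 *: u + c2 *: v) - (c1 *: u' + c2 *: v') = c1 *: (u - u') + c2 *: (v - v').
  by rewrite !scalerBr opprD addrACA.
by rewrite /distE2 /lin2 /= !comb_sub ge_max !comb_le.
Qed.

Lemma lin2_preimage_mball b11 b12 b21 b22 c11 c12 c21 c22 y r :
  entries_in_D b11 b12 b21 b22 -> entries_in_D c11 c12 c21 c22 ->
  (forall p, lin2 c11 c12 c21 c22 (lin2 b11 b12 b21 b22 p) = p) ->
  (forall p, lin2 b11 b12 b21 b22 (lin2 c11 c12 c21 c22 p) = p) ->
  lin2 b11 b12 b21 b22 @^-1` mball (distE2 n) y r =
  mball (distE2 n) (lin2 c11 c12 c21 c22 y) r.
Proof.
move=> hb hc cb bc.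
have iso p q : distE2 n (lin2 b11 b12 b21 b22 p) (lin2 b11 b12 b21 b22 q) = distE2 n p q.
  apply/eqP; rewrite eq_le lin2_dist_le //=.
  by rewrite -{1}(cb p) -{1}(cb q) lin2_dist_le.
have dist_lin2 p : distE2 n y (lin2 b11 b12 b21 b22 p) = distE2 n (lin2 c11 c12 c21 c22 y) p.
  by rewrite -{1}(bc y) iso.
by apply/seteqP; split => p; rewrite /mball /= dist_lin2.
Qed.

Lemma orthonormal_det_neq0 (a11 a12 a21 a22 : K) :
  Defs.orthonormal a (a11, a12) (a21, a22) -> a11 * a22 - a12 * a21 != 0.
Proof.
move=> [/= row1 [_ iso]]; apply/eqP => D0.
(* Orthonormality at the coefficients [(a21, -a11)] and [(a22, -a12)] forces
   [a11 = a12 = 0]. *)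
have := iso a21 (- a11); have := iso a22 (- a12).
have -> : a21 * a11 + - a11 * a21 = 0 by ring.
have -> : a21 * a12 + - a11 * a22 = 0 by rewrite -oppr0 -D0; ring.
have -> : a22 * a11 + - a12 * a21 = 0 by rewrite -D0; ring.
have -> : a22 * a12 + - a12 * a22 = 0 by ring.
rewrite (nabs0 ha) !(nabsN ha) !maxxx => /esym/eqP + /esym/eqP.
rewrite !eq_le !ge_max => /andP [/andP [_ a12_le0] _] /andP [/andP [_ a11_le0] _].
by have := le_max2 a11_le0 a12_le0; rewrite row1 maxxx ler10.
Qed.

Lemma orthonormal_inverse (a11 a12 a21 a22 : K) : Defs.orthonormal a (a11, a12) (a21, a22) ->
  exists c11 c12 c21 c22,
  [/\ entries_in_D a11 a12 a21 a22, entries_in_D c11 c12 c21 c22,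
      (forall p, lin2 c11 c12 c21 c22 (lin2 a11 a12 a21 a22 p) = p) &
      (forall p, lin2 a11 a12 a21 a22 (lin2 c11 c12 c21 c22 p) = p)].
Proof.
move=> orth; have D0 := orthonormal_det_neq0 orth; move: orth => [/= row1 [row2 iso]].
have max_eq1 (x y : R) : Num.max x y = 1 -> x <= 1 /\ y <= 1.
  by move=> <-; rewrite !le_max !lexx ?orbT.
have [k11 k12] := max_eq1 _ _ row1; have [k21 k22] := max_eq1 _ _ row2.
pose D := a11 * a22 - a12 * a21.
pose c11 := a22 / D; pose c12 := - (a12 / D); pose c21 := - (a21 / D); pose c22 := a11 / D.
have i1 : c11 * a11 + c12 * a21 = 1 by rewrite /c11 /c12 /D; field.
have i2 : c11 * a12 + c12 * a22 = 0 by rewrite /c11 /c12 /D; field.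
have i3 : c21 * a11 + c22 * a21 = 0 by rewrite /c21 /c22 /D; field.
have i4 : c21 * a12 + c22 * a22 = 1 by rewrite /c21 /c22 /D; field.
have j1 : a11 * c11 + a12 * c21 = 1 by rewrite /c11 /c21 /D; field.
have j2 : a11 * c12 + a12 * c22 = 0 by rewrite /c12 /c22 /D; field.
have j3 : a21 * c11 + a22 * c21 = 0 by rewrite /c11 /c21 /D; field.
have j4 : a21 * c12 + a22 * c22 = 1 by rewrite /c12 /c22 /D; field.
have := iso c11 c12; rewrite i1 i2 (nabs1 ha) (nabs0 ha) (max_l ler01).
move=> /esym /max_eq1 [l11 l12].
have := iso c21 c22; rewrite i3 i4 (nabs1 ha) (nabs0 ha) (max_r ler01).
move=> /esym /max_eq1 [l21 l22].
exists c11, c12, c21, c22; split => // p; rewrite lin2_comp.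
  by rewrite i1 i2 i3 i4 lin2_id.
by rewrite j1 j2 j3 j4 lin2_id.
Qed.
End LinearPairs.

Section Gaussian.
Variables (R : realType) (K : fieldType) (a : K -> R) (ha : nonarch_abs a).
Variables (E : lmodType K) (n : E -> R) (hn : ultranorm a n) (hsep : mseparable (distE n)).
Variables (G : set E) (hG : D_submodule a G) (cG : mcompact (distE n) G).
Variables (d : measure_display) (O : measurableType d) (P : probability O R) (X : O -> E).
Hypotheses (hX : rvE n X) (hH : law_is_haar n P X G).
Let hdE : ultrametric (distE n) := ultrametric_distE ha hn.
Let hdE2 : ultrametric (distE2 n) := ultrametric_distE2 ha hn.

Let mborel2_sub_mball_system : mborel (distE2 n) `<=` <<s mball_system (distE2 n) >>.
Proof. exact: mborel_sub_mball_system hdE2 (mseparable_prod hsep hsep). Qed.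

Lemma preimage_pair_mball (T : Type) (Z1 Z2 : T -> E) y r :
  (fun w => (Z1 w, Z2 w)) @^-1` mball (distE2 n) y r =
  Z1 @^-1` mball (distE n) y.1 r `&` Z2 @^-1` mball (distE n) y.2 r.
Proof.
apply/seteqP; split => w; rewrite /mball /distE2 /= ?gt_max; first by move=> /andP.
by move=> [-> ->].
Qed.

Lemma pair_measurable (d' : measure_display) (O' : measurableType d') (Z1 Z2 : O' -> E) :
  rvE n Z1 -> rvE n Z2 -> forall C, mborel (distE2 n) C ->
  measurable ((fun w => (Z1 w, Z2 w)) @^-1` C).
Proof.
move=> h1 h2 C /mborel2_sub_mball_system; move: C.
apply: (smallest_sub (X := [set C | measurable ((fun w => (Z1 w, Z2 w)) @^-1` C)])).
  split => /= [|A mA|F mF]; first by rewrite preimage_set0; exact: measurable0.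
    by rewrite setTD -preimage_setC; exact: measurableC.
  by rewrite preimage_bigcup; exact: bigcupT_measurable.
move=> _ [->|[y [r [r0 ->]]]] /=; first by rewrite preimage_set0; exact: measurable0.
by rewrite preimage_pair_mball; apply: measurableI; [apply: h1 | apply: h2];
  exact: mborel_open (mball_open hdE).
Qed.

Let meetsGG (y : E * E) (r : R) := exists2 g, (G `*` G) g & mball (distE2 n) y r g.

Lemma pair_law_mball (d' : measure_display) (O' : measurableType d') (P' : probability O' R)
  (X1 X2 : O' -> E) : rvE n X1 -> rvE n X2 ->
  same_law n P X P' X1 -> same_law n P X P' X2 -> indepE n P' X1 X2 -> forall y r,
  P' ((fun w => (X1 w, X2 w)) @^-1` mball (distE2 n) y r) =
  if `[< meetsGG y r >]
  then (P (X @^-1` mball (distE n) 0%R r) * P (X @^-1` mball (distE n) 0%R r))%E else 0%E.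
Proof.
move=> h1 h2 law1 law2 ind y r.
have ball_borel c : mborel (distE n) (mball (distE n) c r).
  exact: mborel_open (mball_open hdE).
rewrite preimage_pair_mball ind ?ball_borel // -law1 ?ball_borel // -law2 ?ball_borel //.
rewrite (haar_ball ha hn cG hX hH y.1) (haar_ball ha hn cG hX hH y.2).
have [GG|noGG] := pselect (meetsGG y r).
  have [[g1 g2] [G1 G2]] := GG; rewrite /mball /distE2 /= gt_max => /andP [y1 y2].
  rewrite (asboolT GG) (asboolT (ex_intro2 _ _ g1 G1 y1)).
  by rewrite (asboolT (ex_intro2 _ _ g2 G2 y2)).
rewrite (asboolF noGG); case: asboolP => [[g1 G1 y1]|_]; last by rewrite mul0e.
case: asboolP => [[g2 G2 y2]|_]; last by rewrite mule0.
by exfalso; apply: noGG; exists (g1, g2) => //; rewrite /mball /distE2 /= gt_max y1 y2.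
Qed.

Lemma lin2_meetsGG b11 b12 b21 b22 y r : entries_in_D a b11 b12 b21 b22 ->
  meetsGG y r -> meetsGG (lin2 b11 b12 b21 b22 y) r.
Proof.
move=> hb [g [G1 G2] yg]; have [k11 k12 k21 k22] := hb; case: hG => _ Gadd Gscale.
exists (lin2 b11 b12 b21 b22 g); first by split; apply: Gadd; apply: Gscale.
exact: le_lt_trans (lin2_dist_le hn _ _ hb) yg.
Qed.

Lemma haar_K_gaussian : K_gaussian a n P X.
Proof.
move=> d' O' P' X1 X2 h1 h2 law1 law2 ind a11 a12 a21 a22 orth C BC.
have [c11 [c12 [c21 [c22 [hM hM' M'M MM']]]]] := orthonormal_inverse ha E orth.
pose Z w := (X1 w, X2 w).
have balls_agree : mball_system (distE2 n) `<=`
    [set B | [/\ measurable ((lin2 a11 a12 a21 a22 \o Z) @^-1` B), measurable (Z @^-1` B) &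
      P' ((lin2 a11 a12 a21 a22 \o Z) @^-1` B) = P' (Z @^-1` B)]].
  move=> _ [->|[y [r [r0 ->]]]] /=; first by split => //; exact: measurable0.
  rewrite comp_preimage (lin2_preimage_mball hn _ _ hM hM' M'M MM').
  have Zball y' : measurable (Z @^-1` mball (distE2 n) y' r).
    by apply: pair_measurable h1 h2 _ _; exact: mborel_open (mball_open hdE2).
  split => //; rewrite !(pair_law_mball h1 h2 law1 law2 ind).
  congr (if _ then _ else _); apply/asboolP/asboolP.
    by move=> /(lin2_meetsGG hM); rewrite MM'.
  exact: lin2_meetsGG.
have := lambda_system_subset (mball_system_setI hdE2)
  ((dynkin_lambda_system _).1 (preimage_law_eq_dynkin P' (lin2 a11 a12 a21 a22 \o Z) Z))
  balls_agree (fun _ _ => subsetT _).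
by case/(_ C (mborel2_sub_mball_system BC)).
Qed.
End Gaussian.

Unset Implicit Arguments. Set Strict Implicit.

Theorem theorem4p7 (R : realType) (K : fieldType) (a : K -> R)
  (E : lmodType K) (n : E -> R) (G : set E)
  (d : measure_display) (O : measurableType d) (P : probability O R) (X : O -> E) :
  local_field a ->
  banach a n -> mseparable (distE n) ->
  D_submodule a G -> mcompact (distE n) G ->
  rvE n X -> law_is_haar n P X G ->
  K_gaussian a n P X /\
  G = [set x | forall T : E -> K, dual_elt a n T ->
         ((a (T x))%:E <= ess_sup P (fun w => (a (T (X w)))%:E))%E].
Proof.
move=> hK [hn _] hsep hG cG hX hH; have ha : nonarch_abs a by case: hK.
split; first exact: (haar_K_gaussian ha hn hsep hG cG hX hH).
apply/seteqP; split => [x Gx T dT|x xT]; first exact: (ess_sup_ge ha hn cG hX hH Gx dT).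
apply: contrapT => nGx; have [T dT] := haar_separation hK hn hG cG hX hH nGx.
by apply; exact: xT.
Qed.
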